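(* Let $g_1,g_2$ be independent exponential random variables with means $\varepsilon_1,\varepsilon_2>0$. Fix rates $R_d>R_s\ge0$ and $\rho\ge0$, set $SNR=P_s/\sigma^2$, $INR=P_d/\sigma^2=SNR^\rho$. Define the events $$E_o^{\mathrm{AF}}=\Big\{\tfrac12\log_2\!\Big(1+\frac{SNR^2g_1g_2}{SNR\,g_1+(SNR+INR)g_2+1}\Big)<R_d\Big\},\qquad E_l=\Big\{\tfrac12\log_2\!\Big(1+\frac{g_1SNR}{g_2INR+1}\Big)>R_d-R_s\Big\},$$ and $p_t^{\mathrm{AF}}=\Pr(E_o^{\mathrm{AF}}\cup E_l)$. Then $$\limsup_{SNR\to\infty}\frac{-\log p_t^{\mathrm{AF}}}{\log SNR}=\begin{cases}0,&\rho\le1,\\ \rho-1,&1<\rho\le 3/2,\\ 2-\rho,&3/2<\rho\le2,\\ 0,&\rho\ge2.\end{cases}$$ In particular the generalized secure diversity gain of amplify-and-forward is at most $1/2$, attained only at $\rho=3/2$.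
   Context: Amplify-and-forward relaying in the untrusted relay channel without channel state information at the transmitter: $g_i=|h_i|^2$ with $h_i\sim\mathcal{CN}(0,\varepsilon_i)$ independent ($g_1$ source–relay, $g_2$ destination–relay and relay–destination), $P_s$ source/relay power, $P_d$ destination artificial-noise power, $\sigma^2$ noise variance, $R_d$ total rate, $R_s$ confidential rate. $E_o^{\mathrm{AF}}$ is connection outage at the destination and $E_l$ secrecy outage at the relay. The generalized secure diversity gain is $\limsup_{SNR\to\infty}(-\log p_t)/\log SNR$ with $INR=SNR^\rho$. *)

From Stdlib Require Import Reals Lra.
Open Scope R_scope.

Definition Rltb (x y : R) : bool := if Rlt_dec x y then true else false.

Definition log2 (x : R) : R := ln x / ln 2.

Definition exp_pdf (eps x : R) : R := / eps * exp (- x / eps).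

Definition int_0_inf (f : R -> R) (l : R) : Prop :=
  exists pr : forall M : R, Riemann_integrable f 0 M,
    forall e : R, 0 < e -> exists M0 : R, forall M : R, M0 <= M ->
      Rabs (RiemannInt (pr M) - l) < e.

Definition EoAF (Rd snr inr g1 g2 : R) : bool :=
  Rltb (/ 2 * log2 (1 + snr ^ 2 * g1 * g2 / (snr * g1 + (snr + inr) * g2 + 1))) Rd.

Definition El (Rd Rs snr inr g1 g2 : R) : bool :=
  Rltb (Rd - Rs) (/ 2 * log2 (1 + g1 * snr / (g2 * inr + 1))).

Definition ind_union (Rd Rs snr inr g1 g2 : R) : R :=
  if (EoAF Rd snr inr g1 g2 || El Rd Rs snr inr g1 g2)%bool then 1 else 0.

(* p = Pr(E_o^AF \/ E_l) for g1 ~ Exp(mean e1), g2 ~ Exp(mean e2) independent,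
   computed as the iterated integral of the product density over the event. *)
Definition ProbAF (e1 e2 Rd Rs snr inr p : R) : Prop :=
  exists s : R -> R,
    (forall y, 0 <= y ->
       int_0_inf (fun x => exp_pdf e1 x * ind_union Rd Rs snr inr x y) (s y)) /\
    int_0_inf (fun y => exp_pdf e2 y * s y) p.

Definition limsup_infty (h : R -> R) (L : R) : Prop :=
  forall e : R, 0 < e ->
    (exists X : R, forall x : R, X < x -> h x < L + e) /\
    (forall X : R, exists x : R, X < x /\ L - e < h x).

Definition sdg_AF (rho : R) : R :=
  if Rle_dec rho 1 then 0
  else if Rle_dec rho (3 / 2) then rho - 1
  else if Rle_dec rho 2 then 2 - rho
  else 0.

(* Conditioned on [g2 = y], both events are half-lines in [g1]: the destination is in
   outage iff [g1 < a(y)] (with [a = +oo] for small [y]) and the relay learns too much iff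
   [g1 > b(y)].  So the conditional probability is [1 - (exp (- a / e1) - exp (- b / e1))^+],
   piecewise continuous in [g1] and continuous in [y], and the iterated Riemann integrals
   exist.  Integrating against the law of [g2], the event [E_l] alone gives
   [p >= K SNR^-(rho-1)^+], the event [E_o] alone (using [a(y) >= c INR / SNR^2]) gives
   [p >= K SNR^-(2-rho)^+], and the crude bound [1 - exp (- a / e1) <= a / e1] gives
   [p <= C (SNR^-1 + SNR^(rho-2) + SNR^(1-rho))].  Hence [p] is of exact order [SNR^-d]
   with [d = min ((rho-1)^+, (2-rho)^+)], which is the claimed piecewise gain (the limsup
   is even a limit). *)

From Stdlib Require Import Reals Lra Psatz List ClassicalEpsilon.
From Coquelicot Require Import Coquelicot.
Open Scope R_scope.

Definition locally_integrable (f : R -> R) : Prop := forall u v, ex_RInt f u v.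

Lemma int_0_inf_unique f l1 l2 : int_0_inf f l1 -> int_0_inf f l2 -> l1 = l2.
Proof.
  intros [pr1 H1] [pr2 H2].
  apply Rminus_diag_uniq, Rabs_eq_0, Rle_antisym; [|apply Rabs_pos].
  apply le_epsilon; intros e He.
  destruct (H1 (e / 2) ltac:(lra)) as [M1 HM1], (H2 (e / 2) ltac:(lra)) as [M2 HM2].
  specialize (HM1 (Rmax M1 M2) (Rmax_l _ _)).
  specialize (HM2 (Rmax M1 M2) (Rmax_r _ _)).
  rewrite (RiemannInt_P5 (pr2 _) (pr1 _)) in HM2.
  apply Rabs_def2 in HM1; apply Rabs_def2 in HM2.
  apply Rabs_le; lra.
Qed.

Lemma int_0_inf_le f g l m :
  int_0_inf f l -> int_0_inf g m -> (forall x, 0 < x -> f x <= g x) -> l <= m.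
Proof.
  intros [pr1 H1] [pr2 H2] Hfg.
  apply le_epsilon; intros e He.
  destruct (H1 (e / 2) ltac:(lra)) as [M1 HM1], (H2 (e / 2) ltac:(lra)) as [M2 HM2].
  set (M := Rmax 0 (Rmax M1 M2)).
  specialize (HM1 M (Rle_trans _ _ _ (Rmax_l _ _) (Rmax_r _ _))).
  specialize (HM2 M (Rle_trans _ _ _ (Rmax_r _ _) (Rmax_r _ _))).
  assert (Hmono : RiemannInt (pr1 M) <= RiemannInt (pr2 M)).
  { rewrite <- !RInt_Reals. apply RInt_le.
    - apply Rmax_l.
    - apply ex_RInt_Reals_1, pr1.
    - apply ex_RInt_Reals_1, pr2.
    - intros x Hx; apply Hfg; lra. }
  apply Rabs_def2 in HM1; apply Rabs_def2 in HM2. lra.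
Qed.

Lemma int_0_inf_plus f g l m :
  int_0_inf f l -> int_0_inf g m -> int_0_inf (fun x => f x + g x) (l + m).
Proof.
  intros [pr1 H1] [pr2 H2].
  exists (fun M => Riemann_integrable_plus _ _ _ _ (pr1 M) (pr2 M)).
  intros e He.
  destruct (H1 (e / 2) ltac:(lra)) as [M1 HM1], (H2 (e / 2) ltac:(lra)) as [M2 HM2].
  exists (Rmax M1 M2). intros M HM.
  specialize (HM1 M (Rle_trans _ _ _ (Rmax_l _ _) HM)).
  specialize (HM2 M (Rle_trans _ _ _ (Rmax_r _ _) HM)).
  rewrite <- RInt_Reals, (RInt_plus f g).
  2: apply ex_RInt_Reals_1, pr1. 2: apply ex_RInt_Reals_1, pr2.
  rewrite (RInt_Reals _ _ _ (pr1 M)), (RInt_Reals _ _ _ (pr2 M)).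
  apply Rabs_def2 in HM1; apply Rabs_def2 in HM2.
  apply Rabs_def1; unfold plus; simpl; lra.
Qed.

(* The tail [k exp (- lam M)] is eventually below any [e] since [exp t > t]. *)
Lemma int_0_inf_of_exp_tail f l k lam M1 :
  locally_integrable f -> 0 < lam ->
  (forall M, M1 <= M -> RInt f 0 M = l - k * exp (- (lam * M)) :> R) ->
  int_0_inf f l.
Proof.
  intros Hf Hlam HR.
  exists (fun M => ex_RInt_Reals_0 _ _ _ (Hf 0 M)).
  intros e He.
  exists (Rmax 1 (Rmax M1 ((Rabs k + 1) / (lam * e)))). intros M HM.
  pose proof (Rmax_l 1 (Rmax M1 ((Rabs k + 1) / (lam * e)))) as H1.
  pose proof (Rmax_l M1 ((Rabs k + 1) / (lam * e))) as H2.
  pose proof (Rmax_r M1 ((Rabs k + 1) / (lam * e))) as H3.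
  pose proof (Rmax_r 1 (Rmax M1 ((Rabs k + 1) / (lam * e)))) as H4.
  rewrite <- RInt_Reals, HR by lra.
  replace (l - k * exp (- (lam * M)) - l) with (- (k * exp (- (lam * M)))) by ring.
  rewrite Rabs_Ropp, Rabs_mult, (Rabs_right (exp _)) by (left; apply exp_pos).
  assert (HlM : 0 < lam * M) by nra.
  assert (Hexp : lam * M < exp (lam * M)) by (pose proof (exp_ineq1 (lam * M) ltac:(lra)); lra).
  assert (HM' : Rabs k + 1 <= lam * e * M).
  { assert (Hq : (Rabs k + 1) / (lam * e) <= M) by lra.
    apply Rle_div_l in Hq; nra. }
  rewrite exp_Ropp.
  apply Rle_lt_trans with (Rabs k * / (lam * M)).
  - apply Rmult_le_compat_l; [apply Rabs_pos|]. apply Rinv_le_contravar; lra.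
  - apply Rlt_div_l; [lra|]. pose proof (Rabs_pos k). nra.
Qed.

Lemma int_0_inf_of_bounded f K :
  locally_integrable f -> (forall x, 0 < x -> 0 <= f x) ->
  (forall M, 0 <= M -> RInt f 0 M <= K) ->
  exists l, int_0_inf f l.
Proof.
  intros Hf Hpos HK.
  set (E := fun r => exists M, 0 <= M /\ r = RInt f 0 M).
  destruct (completeness E) as [l [Hub Hlub]].
  { exists K. intros r [M [HM ->]]. auto. }
  { exists (RInt f 0 0), 0. split; [lra | auto]. }
  exists l, (fun M => ex_RInt_Reals_0 _ _ _ (Hf 0 M)).
  intros e He.
  assert (exists M0, 0 <= M0 /\ l - e < RInt f 0 M0) as [M0 [HM0 HlM0]].
  { apply Classical_Prop.NNPP; intro Hn.
    assert (is_upper_bound E (l - e)).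
    { intros r [M [HM ->]]. apply Rnot_lt_le. intro. apply Hn. eauto. }
    specialize (Hlub _ H). lra. }
  exists M0. intros M HM.
  rewrite <- RInt_Reals.
  assert (RInt f 0 M <= l) by (apply Hub; exists M; split; [lra | auto]).
  assert (RInt f 0 M0 <= RInt f 0 M).
  { rewrite <- (RInt_Chasles f 0 M0 M) by auto. unfold plus; simpl.
    assert (0 <= RInt f M0 M) by (apply RInt_ge_0; [lra | auto | intros; apply Hpos; lra]).
    lra. }
  apply Rabs_def1; lra.
Qed.

Section PiecewiseContinuous.

Variable f : R -> R.

Lemma ex_RInt_piecewise_continuous_on (L : list R) u v : u <= v ->
  (forall a b, u <= a -> b <= v -> a < b -> (forall p, In p L -> ~ a < p < b) ->
     exists g, (forall x, continuous g x) /\ forall x, a < x < b -> f x = g x) ->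
  ex_RInt f u v.
Proof.
  revert u v. induction L as [|p L IH]; intros u v Huv Hpc.
  - destruct (Req_dec u v) as [<-|Hne]; [apply ex_RInt_point|].
    destruct (Hpc u v ltac:(lra) ltac:(lra) ltac:(lra)) as [g [Hg Hfg]];
      [intros ? [] |].
    apply (ex_RInt_ext g).
    + rewrite Rmin_left, Rmax_right by lra. intros; symmetry; auto.
    + apply (ex_RInt_continuous (V := R_CompleteNormedModule)); auto.
  - destruct (Rlt_dec u p) as [Hup|Hup]; [destruct (Rlt_dec p v) as [Hpv|Hpv]|].
    + apply (ex_RInt_Chasles f u p v); apply IH; try lra;
        intros a b Ha Hb Hab HL; apply Hpc; try lra;
        (intros q [<-|Hq]; [lra | auto]).
    + apply IH; auto. intros a b Ha Hb Hab HL. apply Hpc; auto.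
      intros q [<-|Hq]; [lra | auto].
    + apply IH; auto. intros a b Ha Hb Hab HL. apply Hpc; auto.
      intros q [<-|Hq]; [lra | auto].
Qed.

Lemma locally_integrable_piecewise_continuous (L : list R) :
  (forall a b, a < b -> (forall p, In p L -> ~ a < p < b) ->
     exists g, (forall x, continuous g x) /\ forall x, a < x < b -> f x = g x) ->
  locally_integrable f.
Proof.
  intros Hpc u v.
  destruct (Rle_dec u v); [|apply ex_RInt_swap];
    apply (ex_RInt_piecewise_continuous_on L); try lra; auto.
Qed.

End PiecewiseContinuous.

Lemma locally_integrable_continuous f :
  (forall x, continuous f x) -> locally_integrable f.
Proof. intros H u v. apply (ex_RInt_continuous (V := R_CompleteNormedModule)); auto. Qed.

Definition exp_decay (k lam y : R) : R := k * exp (- (lam * y)).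

Lemma continuous_exp_decay k lam x : continuous (exp_decay k lam) x.
Proof. apply (ex_derive_continuous (V := R_NormedModule)). unfold exp_decay. auto_derive. auto. Qed.

Lemma RInt_exp_decay k lam p q : lam <> 0 ->
  RInt (exp_decay k lam) p q = k / lam * (exp (- (lam * p)) - exp (- (lam * q))).
Proof.
  intros Hlam. apply is_RInt_unique.
  replace (k / lam * (exp (- (lam * p)) - exp (- (lam * q)))) with
    (minus ((fun y => - k / lam * exp (- (lam * y))) q) ((fun y => - k / lam * exp (- (lam * y))) p))
    by (unfold minus, plus, opp; simpl; field; auto).
  apply (is_RInt_derive (V := R_CompleteNormedModule) (fun y => - k / lam * exp (- (lam * y)))).
  - intros x _. unfold exp_decay. auto_derive; auto. field. auto.
  - intros x _. apply continuous_exp_decay.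
Qed.

Lemma int_0_inf_exp_decay k lam : 0 < lam -> int_0_inf (exp_decay k lam) (k / lam).
Proof.
  intros Hlam. apply (int_0_inf_of_exp_tail _ _ (k / lam) lam 0); auto.
  - intros u v. apply locally_integrable_continuous, continuous_exp_decay.
  - intros M _. rewrite RInt_exp_decay by lra.
    rewrite Rmult_0_r, Ropp_0, exp_0. ring.
Qed.

Lemma exp_pdf_decay e x : 0 < e -> exp_pdf e x = exp_decay (/ e) (/ e) x.
Proof. intros He. unfold exp_pdf, exp_decay. do 3 f_equal. field. lra. Qed.

Lemma exp_pdf_pos e x : 0 < e -> 0 < exp_pdf e x.
Proof. intros He. unfold exp_pdf. apply Rmult_lt_0_compat; [apply Rinv_0_lt_compat; auto | apply exp_pos]. Qed.

Lemma continuous_exp_pdf e x : 0 < e -> continuous (exp_pdf e) x.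
Proof.
  intros He. apply (continuous_ext (exp_decay (/ e) (/ e))).
  - intros; symmetry; apply exp_pdf_decay; auto.
  - apply continuous_exp_decay.
Qed.

(* [2 ^ (2 r) - 1], the SNR at which [1/2 log2 (1 + SNR)] reaches the rate [r]. *)
Definition snr_threshold (r : R) : R := exp (2 * r * ln 2) - 1.

Lemma ln_2_pos : 0 < ln 2.
Proof. rewrite <- ln_1. apply ln_increasing; lra. Qed.

Lemma snr_threshold_pos r : 0 < r -> 0 < snr_threshold r.
Proof.
  intros Hr. unfold snr_threshold. pose proof ln_2_pos.
  pose proof (exp_ineq1 (2 * r * ln 2) ltac:(nra)). nra.
Qed.

Lemma ln_nonpos z : z <= 0 -> ln z = 0.
Proof. intros Hz. unfold ln. destruct (Rlt_dec 0 z); [exfalso; lra | auto]. Qed.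

Lemma ln_lt_iff t z : 0 < t -> (ln z < t <-> z < exp t).
Proof.
  intros Ht. destruct (Rlt_dec 0 z) as [Hz|Hz].
  - split; intros H.
    + rewrite <- (exp_ln z) by auto. apply exp_increasing; auto.
    + rewrite <- (ln_exp t). apply ln_increasing; auto.
  - rewrite ln_nonpos by lra. pose proof (exp_pos t). lra.
Qed.

Lemma lt_ln_iff t z : 0 < t -> (t < ln z <-> exp t < z).
Proof.
  intros Ht. destruct (Rlt_dec 0 z) as [Hz|Hz].
  - split; intros H.
    + rewrite <- (exp_ln z) by auto. apply exp_increasing; auto.
    + rewrite <- (ln_exp t). apply ln_increasing; auto. apply exp_pos.
  - rewrite ln_nonpos by lra. pose proof (exp_pos t). lra.
Qed.

Lemma half_log2_lt_iff r w : 0 < r -> (/ 2 * log2 (1 + w) < r <-> w < snr_threshold r).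
Proof.
  intros Hr. pose proof ln_2_pos. unfold log2, snr_threshold.
  replace (/ 2 * (ln (1 + w) / ln 2)) with (ln (1 + w) / (2 * ln 2)) by (field; apply Rgt_not_eq, ln_2_pos).
  rewrite Rlt_div_l by lra.
  replace (r * (2 * ln 2)) with (2 * r * ln 2) by ring.
  rewrite ln_lt_iff by nra. lra.
Qed.

Lemma lt_half_log2_iff r w : 0 < r -> (r < / 2 * log2 (1 + w) <-> snr_threshold r < w).
Proof.
  intros Hr. pose proof ln_2_pos. unfold log2, snr_threshold.
  replace (/ 2 * (ln (1 + w) / ln 2)) with (ln (1 + w) / (2 * ln 2)) by (field; apply Rgt_not_eq, ln_2_pos).
  rewrite <- Rlt_div_r by lra.
  replace (r * (2 * ln 2)) with (2 * r * ln 2) by ring.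
  rewrite lt_ln_iff by nra. lra.
Qed.

Lemma Rltb_true a b : Rltb a b = true <-> a < b.
Proof.
  unfold Rltb. destruct (Rlt_dec a b) as [h|h]; split; intro H; try discriminate; auto.
Qed.

(* For fixed [g2], both events are sign conditions on affine functions of [g1]. *)
Lemma affine_sign_stable (f : R -> R) a b r u v x m :
  (forall z, f z = a * z + b) -> (a <> 0 -> f r = 0) -> ~ (u < r < v) ->
  u < x < v -> u < m < v ->
  (f x < 0 <-> f m < 0) /\ (0 < f x <-> 0 < f m) /\ (f x = 0 <-> f m = 0).
Proof.
  intros Hf Hr Hruv Hx Hm. rewrite !Hf.
  destruct (Req_dec a 0) as [->|Ha]; [rewrite !Rmult_0_l; tauto|].
  specialize (Hr Ha). rewrite Hf in Hr.
  replace b with (- (a * r)) by lra.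
  destruct (Rle_dec r u); [|assert (v <= r) by lra];
    destruct (Rlt_dec 0 a); repeat split; intros; nra.
Qed.

Definition leak_bound (Rd Rs s I y : R) : R := snr_threshold (Rd - Rs) * (y * I + 1) / s.
Definition outage_slope (Rd s y : R) : R := s * s * y - snr_threshold Rd * s.
Definition outage_level (Rd s I y : R) : R := snr_threshold Rd * ((s + I) * y + 1).
Definition outage_bound (Rd s I y : R) : R := outage_level Rd s I y / outage_slope Rd s y.
Definition outage_pole (s I y : R) : R := - ((s + I) * y + 1) / s.

Section Events.

Variables Rd Rs s I y : R.
Hypotheses (HRs : 0 <= Rs) (HRd : Rs < Rd) (Hs : 0 < s) (HI : 0 <= I) (Hy : 0 <= y).

Lemma El_iff x : El Rd Rs s I x y = true <-> 0 < s * x - snr_threshold (Rd - Rs) * (y * I + 1).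
Proof.
  unfold El. rewrite Rltb_true, lt_half_log2_iff by lra.
  assert (0 < y * I + 1) by nra.
  rewrite <- Rlt_div_r by lra. unfold Rdiv. split; intros; nra.
Qed.

(* At the pole [D = 0] the quotient is [x / 0 = 0], so the destination is in outage. *)
Lemma EoAF_iff x : EoAF Rd s I x y = true <->
  (0 < s * x + ((s + I) * y + 1) /\ outage_slope Rd s y * x - outage_level Rd s I y < 0) \/
  (s * x + ((s + I) * y + 1) < 0 /\ 0 < outage_slope Rd s y * x - outage_level Rd s I y) \/
  s * x + ((s + I) * y + 1) = 0.
Proof.
  assert (Hc : 0 < snr_threshold Rd) by (apply snr_threshold_pos; lra).
  unfold EoAF. rewrite Rltb_true, half_log2_lt_iff by lra.
  assert (HQ : outage_slope Rd s y * x - outage_level Rd s I y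
               = s ^ 2 * x * y - snr_threshold Rd * (s * x + (s + I) * y + 1))
    by (unfold outage_slope, outage_level; ring).
  rewrite HQ.
  destruct (Rtotal_order (s * x + (s + I) * y + 1) 0) as [HD|[HD|HD]];
    replace (s * x + ((s + I) * y + 1)) with (s * x + (s + I) * y + 1) by ring.
  - replace (s ^ 2 * x * y / (s * x + (s + I) * y + 1))
      with (- (s ^ 2 * x * y) / - (s * x + (s + I) * y + 1)) by (field; lra).
    rewrite Rlt_div_l by lra. split; intros H; [lra | destruct H as [[? ?]|[[? ?]|?]]; lra].
  - rewrite HD. unfold Rdiv. rewrite Rinv_0, Rmult_0_r. lra.
  - rewrite Rlt_div_l by lra. split; intros H; [lra | destruct H as [[? ?]|[[? ?]|?]]; lra].
Qed.

Lemma ind_union_stable u v x m :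
  (forall p, In p (leak_bound Rd Rs s I y :: outage_pole s I y :: outage_bound Rd s I y :: nil) ->
     ~ (u < p < v)) ->
  u < x < v -> u < m < v ->
  ind_union Rd Rs s I x y = ind_union Rd Rs s I m y.
Proof.
  intros HL Hx Hm.
  destruct (affine_sign_stable (fun z => s * z - snr_threshold (Rd - Rs) * (y * I + 1))
              s (- (snr_threshold (Rd - Rs) * (y * I + 1))) (leak_bound Rd Rs s I y) u v x m)
    as (L1 & L2 & L3);
    [intros z; ring | intros _; unfold leak_bound; field; lra | apply HL; simpl; auto | auto | auto |].
  destruct (affine_sign_stable (fun z => s * z + ((s + I) * y + 1))
              s ((s + I) * y + 1) (outage_pole s I y) u v x m) as (D1 & D2 & D3);
    [intros z; ring | intros _; unfold outage_pole; field; lra | apply HL; simpl; auto | auto | auto |].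
  destruct (affine_sign_stable (fun z => outage_slope Rd s y * z - outage_level Rd s I y)
              (outage_slope Rd s y) (- outage_level Rd s I y) (outage_bound Rd s I y) u v x m)
    as (Q1 & Q2 & Q3);
    [intros z; ring | intros Ha; unfold outage_bound; field; auto | apply HL; simpl; auto
    | auto | auto |].
  unfold ind_union.
  replace (EoAF Rd s I x y || El Rd Rs s I x y)%bool with (EoAF Rd s I m y || El Rd Rs s I m y)%bool;
    [reflexivity|].
  apply Bool.eq_iff_eq_true. rewrite !Bool.orb_true_iff, !EoAF_iff, !El_iff. tauto.
Qed.

Lemma ind_union_pos_true x : 0 < x ->
  outage_slope Rd s y * x < outage_level Rd s I y \/ leak_bound Rd Rs s I y < x ->
  ind_union Rd Rs s I x y = 1.
Proof.
  intros Hx H. unfold ind_union.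
  replace (EoAF Rd s I x y || El Rd Rs s I x y)%bool with true; [reflexivity|].
  symmetry. apply Bool.orb_true_iff. rewrite EoAF_iff, El_iff.
  unfold leak_bound in H. rewrite Rlt_div_l in H by lra.
  destruct H; [left; left | right]; nra.
Qed.

Lemma ind_union_pos_false x : 0 < x ->
  outage_level Rd s I y <= outage_slope Rd s y * x -> x <= leak_bound Rd Rs s I y ->
  ind_union Rd Rs s I x y = 0.
Proof.
  intros Hx HQ Hb. unfold ind_union.
  replace (EoAF Rd s I x y || El Rd Rs s I x y)%bool with false; [reflexivity|].
  symmetry. apply Bool.not_true_iff_false. rewrite Bool.orb_true_iff, EoAF_iff, El_iff.
  unfold leak_bound in Hb. apply Rle_div_r in Hb; [|lra].
  assert (0 < s * x + ((s + I) * y + 1)) by nra. lra.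
Qed.

End Events.

Lemma exp_le_compat a b : a <= b -> exp a <= exp b.
Proof. intros [H|<-]; [left; apply exp_increasing; auto | lra]. Qed.

Lemma exp_neg_div_le e a b : 0 < e -> a <= b -> exp (- b / e) <= exp (- a / e).
Proof.
  intros He Hab. apply exp_le_compat. unfold Rdiv.
  apply Rmult_le_compat_r; [left; apply Rinv_0_lt_compat |]; lra.
Qed.

Lemma RInt_exp_pdf_on e f p q : 0 < e -> p <= q ->
  (forall x, p < x < q -> f x = exp_pdf e x) ->
  RInt f p q = exp (- p / e) - exp (- q / e) :> R.
Proof.
  intros He Hpq Hf.
  rewrite (RInt_ext f (exp_decay (/ e) (/ e))).
  - rewrite RInt_exp_decay by (apply Rinv_neq_0_compat; intro; lra).
    replace (- p / e) with (- (/ e * p)) by (unfold Rdiv; ring).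
    replace (- q / e) with (- (/ e * q)) by (unfold Rdiv; ring).
    field. intro; lra.
  - rewrite Rmin_left, Rmax_right by lra. intros x Hx. rewrite Hf by auto. apply exp_pdf_decay; auto.
Qed.

Lemma RInt_zero_on f p q : p <= q -> (forall x, p < x < q -> f x = 0) -> RInt f p q = 0 :> R.
Proof.
  intros Hpq Hf.
  rewrite (RInt_ext f (fun _ => 0)).
  - rewrite RInt_const. apply Rmult_0_r.
  - rewrite Rmin_left, Rmax_right by lra. auto.
Qed.

Lemma int_0_inf_exp_pdf_mass e f : 0 < e -> locally_integrable f ->
  (forall x, 0 < x -> f x = exp_pdf e x) -> int_0_inf f 1.
Proof.
  intros He Hint Hf.
  apply (int_0_inf_of_exp_tail _ _ 1 (/ e) 0); auto; [apply Rinv_0_lt_compat; auto|].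
  intros M HM. rewrite (RInt_exp_pdf_on e) by (auto; intros; apply Hf; lra).
  replace (- 0 / e) with 0 by (field; intro; lra). rewrite exp_0.
  replace (- M / e) with (- (/ e * M)) by (unfold Rdiv; ring). ring.
Qed.

(* When [b < a] the two tails cover everything and the mass is [1]. *)
Lemma int_0_inf_exp_pdf_two_tails e a b f : 0 < e -> 0 < a -> 0 < b -> locally_integrable f ->
  (forall x, 0 < x -> x < a \/ b < x -> f x = exp_pdf e x) ->
  (forall x, 0 < x -> a <= x <= b -> f x = 0) ->
  int_0_inf f (1 - Rmax 0 (exp (- a / e) - exp (- b / e))).
Proof.
  intros He Ha Hb Hint Htail Hmid.
  assert (Hch : forall p q r, RInt f p q + RInt f q r = RInt f p r)
    by (intros; apply (RInt_Chasles (V := R_CompleteNormedModule)); apply Hint).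
  pose proof (exp_neg_div_le e) as Hmono.
  apply (int_0_inf_of_exp_tail _ _ 1 (/ e) (Rmax a b)); auto; [apply Rinv_0_lt_compat; auto|].
  intros M HM. pose proof (Rmax_l a b). pose proof (Rmax_r a b).
  replace (- (/ e * M)) with (- M / e) by (unfold Rdiv; ring).
  rewrite <- (Hch 0 a M), (RInt_exp_pdf_on e f 0 a) by (auto; lra || (intros; apply Htail; lra)).
  destruct (Rle_dec a b) as [Hab|Hab].
  - rewrite Rmax_right by (pose proof (Hmono a b He Hab); lra).
    rewrite <- (Hch a b M), (RInt_zero_on f a b), (RInt_exp_pdf_on e f b M)
      by (auto; lra || (intros; apply Htail; lra) || (intros; apply Hmid; lra)).
    replace (- 0 / e) with 0 by (field; intro; lra). rewrite exp_0. ring.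
  - rewrite Rmax_left by (pose proof (Hmono b a He ltac:(lra)); lra).
    rewrite (RInt_exp_pdf_on e f a M) by (auto; lra || (intros; apply Htail; lra)).
    replace (- 0 / e) with 0 by (field; intro; lra). rewrite exp_0. ring.
Qed.

Definition outage_tail (e1 Rd s I y : R) : R :=
  if Rlt_dec 0 (outage_slope Rd s y) then exp (- outage_bound Rd s I y / e1) else 0.
Definition leak_tail (e1 Rd Rs s I y : R) : R := exp (- leak_bound Rd Rs s I y / e1).

(* [Pr (E_o \/ E_l | g2 = y)]: given [g2 = y >= 0] the outage event is [g1 < outage_bound]
   (all of [g1 > 0] when the slope is not positive) and the leakage event is
   [g1 > leak_bound]. *)
Definition inner_prob (e1 Rd Rs s I y : R) : R :=
  1 - Rmax 0 (outage_tail e1 Rd s I y - leak_tail e1 Rd Rs s I y).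

Section InnerIntegral.

Variables e1 Rd Rs s I : R.
Hypotheses (He1 : 0 < e1) (HRs : 0 <= Rs) (HRd : Rs < Rd) (Hs : 0 < s) (HI : 0 <= I).

Lemma outage_level_pos y : 0 <= y -> 0 < outage_level Rd s I y.
Proof. intros Hy. unfold outage_level. apply Rmult_lt_0_compat; [apply snr_threshold_pos; lra | nra]. Qed.

Lemma leak_bound_pos y : 0 <= y -> 0 < leak_bound Rd Rs s I y.
Proof.
  intros Hy. unfold leak_bound. apply Rdiv_lt_0_compat; auto.
  apply Rmult_lt_0_compat; [apply snr_threshold_pos; lra | nra].
Qed.

Lemma locally_integrable_inner y : 0 <= y ->
  locally_integrable (fun x => exp_pdf e1 x * ind_union Rd Rs s I x y).
Proof.
  intros Hy.
  apply (locally_integrable_piecewise_continuous _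
           (leak_bound Rd Rs s I y :: outage_pole s I y :: outage_bound Rd s I y :: nil)).
  intros a b Hab HL.
  exists (fun x => exp_pdf e1 x * ind_union Rd Rs s I ((a + b) / 2) y). split.
  - intros x. apply (continuous_mult (exp_pdf e1) (fun _ => _)).
    + apply continuous_exp_pdf; auto.
    + apply continuous_const.
  - intros x Hx. rewrite (ind_union_stable Rd Rs s I y HRs HRd Hs HI Hy a b x ((a + b) / 2));
      auto; lra.
Qed.

Lemma int_0_inf_inner y : 0 <= y ->
  int_0_inf (fun x => exp_pdf e1 x * ind_union Rd Rs s I x y) (inner_prob e1 Rd Rs s I y).
Proof.
  intros Hy. pose proof (outage_level_pos y Hy) as Hlev.
  unfold inner_prob, outage_tail, leak_tail.
  destruct (Rlt_dec 0 (outage_slope Rd s y)) as [Hal|Hal].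
  - apply int_0_inf_exp_pdf_two_tails; auto.
    + apply Rdiv_lt_0_compat; auto.
    + apply leak_bound_pos; auto.
    + apply locally_integrable_inner; auto.
    + intros x Hx Htail. unfold outage_bound in Htail. rewrite <- Rlt_div_r in Htail by lra.
      assert (outage_slope Rd s y * x < outage_level Rd s I y \/ leak_bound Rd Rs s I y < x)
        by (destruct Htail; [left | right]; lra).
      rewrite ind_union_pos_true by auto.
      apply Rmult_1_r.
    + intros x Hx [Hax Hxb]. unfold outage_bound in Hax. apply Rle_div_l in Hax; [|lra].
      rewrite ind_union_pos_false by (auto; lra). apply Rmult_0_r.
  - rewrite Rmax_left by (pose proof (exp_pos (- leak_bound Rd Rs s I y / e1)); lra).
    replace (1 - 0) with 1 by ring.
    apply (int_0_inf_exp_pdf_mass e1); auto; [apply locally_integrable_inner; auto|].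
    intros x Hx. rewrite ind_union_pos_true by (auto; left; nra). apply Rmult_1_r.
Qed.

End InnerIntegral.

(* The outage tail switches on where [outage_slope] vanishes and the outage bound blows up;
   near such points it is [exp_neg_inv] of a rational function of [g2]. *)
Definition exp_neg_inv (t : R) : R := if Rlt_dec 0 t then exp (- / t) else 0.

Lemma locally_of_Rabs (P : R -> Prop) x eps : 0 < eps ->
  (forall z, Rabs (z - x) < eps -> P z) -> locally x P.
Proof. intros He H. exists (mkposreal eps He). intros z Hz. apply H. exact Hz. Qed.

(* At [0] the bound [exp (- / t) < t] does the job. *)
Lemma continuous_exp_neg_inv t : continuous exp_neg_inv t.
Proof.
  destruct (Rtotal_order t 0) as [Ht|[->|Ht]].
  - apply (continuous_ext_loc _ (fun _ => 0)); [|apply continuous_const].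
    apply (locally_of_Rabs _ _ (- t)); [lra|]. intros z Hz. apply Rabs_def2 in Hz.
    unfold exp_neg_inv. destruct (Rlt_dec 0 z); [exfalso; lra | auto].
  - apply filterlim_locally. intros eps. exists eps. intros z Hz.
    change (Rabs (z - 0) < eps) in Hz. change (Rabs (exp_neg_inv z - exp_neg_inv 0) < eps).
    rewrite Rminus_0_r in Hz. apply Rabs_def2 in Hz.
    unfold exp_neg_inv. destruct (Rlt_dec 0 0); [lra|].
    destruct (Rlt_dec 0 z) as [Hz0|Hz0]; rewrite Rminus_0_r; [|rewrite Rabs_R0; apply cond_pos].
    rewrite Rabs_right by (left; apply exp_pos).
    apply Rlt_trans with z; [|lra].
    pose proof (exp_ineq1_le (/ z)) as Hexp. pose proof (Rinv_0_lt_compat z Hz0).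
    rewrite exp_Ropp. rewrite <- (Rinv_inv z) at 2. apply Rinv_lt_contravar; [|lra].
    apply Rmult_lt_0_compat; [auto | apply exp_pos].
  - apply (continuous_ext_loc _ (fun z => exp (- / z))).
    + apply (locally_of_Rabs _ _ t); [lra|]. intros z Hz. apply Rabs_def2 in Hz.
      unfold exp_neg_inv. destruct (Rlt_dec 0 z); [auto | exfalso; lra].
    + apply (ex_derive_continuous (V := R_NormedModule)). auto_derive. lra.
Qed.

Lemma continuous_Rmax0 t : continuous (Rmax 0) t.
Proof.
  apply (continuous_ext (fun t => (t + Rabs t) * / 2)).
  - intros x. change ((x + Rabs x) * / 2 = Rmax 0 x :> R). unfold Rmax. destruct (Rle_dec 0 x).
    + rewrite Rabs_right by lra. field.
    + rewrite Rabs_left by lra. field.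
  - apply (continuous_mult (fun t => t + Rabs t) (fun _ => / 2)); [|apply continuous_const].
    apply (continuous_plus (fun t => t) Rabs); [apply continuous_id | apply continuous_Rabs].
Qed.

Lemma exp_neg_div_le_1 a e : 0 <= a -> 0 < e -> exp (- a / e) <= 1.
Proof.
  intros Ha He. replace 1 with (exp (- 0 / e)) by (rewrite <- exp_0; f_equal; field; intro; lra).
  apply exp_neg_div_le; auto.
Qed.

Lemma one_sub_Rmax0_bounds A B : 0 <= A <= 1 -> 0 <= B <= 1 ->
  0 <= 1 - Rmax 0 (A - B) <= 1 /\ 1 - Rmax 0 (A - B) <= 1 - A + B /\
  1 - A <= 1 - Rmax 0 (A - B) /\ B <= 1 - Rmax 0 (A - B).
Proof. intros HA HB. unfold Rmax. destruct (Rle_dec 0 (A - B)); lra. Qed.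

Section InnerProb.

Variables e1 Rd Rs s I : R.
Hypotheses (He1 : 0 < e1) (HRs : 0 <= Rs) (HRd : Rs < Rd) (Hs : 0 < s) (HI : 0 <= I).

Lemma outage_slope_pos_y y : 0 <= outage_slope Rd s y -> 0 < y.
Proof.
  unfold outage_slope. pose proof (snr_threshold_pos Rd ltac:(lra)). intros. nra.
Qed.

Lemma outage_tail_exp_neg_inv y : 0 < outage_level Rd s I y ->
  outage_tail e1 Rd s I y = exp_neg_inv (e1 * outage_slope Rd s y / outage_level Rd s I y).
Proof.
  intros Hlev. unfold outage_tail, exp_neg_inv, outage_bound.
  destruct (Rlt_dec 0 (outage_slope Rd s y)) as [Hal|Hal];
    destruct (Rlt_dec 0 (e1 * outage_slope Rd s y / outage_level Rd s I y)) as [Hq|Hq]; auto.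
  - f_equal. field. repeat repeat split; intro; lra.
  - exfalso. apply Hq, Rdiv_lt_0_compat; auto. nra.
  - exfalso. apply Hal.
    assert (e1 * outage_slope Rd s y
            = e1 * outage_slope Rd s y / outage_level Rd s I y * outage_level Rd s I y)
      by (field; intro; lra).
    nra.
Qed.

Lemma continuous_outage_tail y : continuous (outage_tail e1 Rd s I) y.
Proof.
  destruct (Rlt_dec (outage_slope Rd s y) 0) as [Hneg|Hnn].
  - apply (continuous_ext_loc _ (fun _ => 0)); [|apply continuous_const].
    apply (locally_of_Rabs _ _ (- outage_slope Rd s y / (s * s))).
    { apply Rdiv_lt_0_compat; nra. }
    intros z Hz. apply Rabs_def2 in Hz.
    assert (Hd : s * s * (- outage_slope Rd s y / (s * s)) = - outage_slope Rd s y)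
      by (field; intro; nra).
    unfold outage_tail. destruct (Rlt_dec 0 (outage_slope Rd s z)); auto.
    exfalso. unfold outage_slope in *. nra.
  - pose proof (outage_slope_pos_y y ltac:(lra)) as Hy.
    apply (continuous_ext_loc _
             (fun z => exp_neg_inv (e1 * outage_slope Rd s z / outage_level Rd s I z))).
    + apply (locally_of_Rabs _ _ y); auto. intros z Hz. apply Rabs_def2 in Hz.
      symmetry. apply outage_tail_exp_neg_inv, (outage_level_pos Rd Rs); auto; lra.
    + apply (continuous_comp (fun z => e1 * outage_slope Rd s z / outage_level Rd s I z)
                             exp_neg_inv); [|apply continuous_exp_neg_inv].
      pose proof (outage_level_pos Rd Rs s I HRs HRd Hs HI y ltac:(lra)) as Hlev.
      apply (ex_derive_continuous (V := R_NormedModule)).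
      unfold outage_slope, outage_level in *. auto_derive. intro; lra.
Qed.

Lemma continuous_leak_tail y : continuous (leak_tail e1 Rd Rs s I) y.
Proof.
  apply (ex_derive_continuous (V := R_NormedModule)).
  unfold leak_tail, leak_bound. auto_derive. repeat split; intro; lra.
Qed.

Lemma continuous_inner_prob y : continuous (inner_prob e1 Rd Rs s I) y.
Proof.
  apply (continuous_minus (fun _ => 1)
           (fun y => Rmax 0 (outage_tail e1 Rd s I y - leak_tail e1 Rd Rs s I y)));
    [apply continuous_const|].
  apply (continuous_comp (fun y => outage_tail e1 Rd s I y - leak_tail e1 Rd Rs s I y) (Rmax 0));
    [|apply continuous_Rmax0].
  apply (continuous_minus (outage_tail e1 Rd s I) (leak_tail e1 Rd Rs s I));
    [apply continuous_outage_tail | apply continuous_leak_tail].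
Qed.

Lemma outage_tail_range y : 0 <= outage_tail e1 Rd s I y <= 1.
Proof.
  unfold outage_tail. destruct (Rlt_dec 0 (outage_slope Rd s y)) as [Hal|]; [|lra].
  pose proof (outage_slope_pos_y y ltac:(lra)).
  pose proof (outage_level_pos Rd Rs s I HRs HRd Hs HI y ltac:(lra)).
  split; [left; apply exp_pos | apply exp_neg_div_le_1; auto].
  left. apply Rdiv_lt_0_compat; auto.
Qed.

Lemma leak_tail_range y : 0 <= y -> 0 <= leak_tail e1 Rd Rs s I y <= 1.
Proof.
  intros Hy. unfold leak_tail.
  split; [left; apply exp_pos | apply exp_neg_div_le_1; auto].
  left. apply leak_bound_pos; auto.
Qed.

Lemma inner_prob_bounds y : 0 <= y ->
  0 <= inner_prob e1 Rd Rs s I y <= 1 /\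
  inner_prob e1 Rd Rs s I y <= 1 - outage_tail e1 Rd s I y + leak_tail e1 Rd Rs s I y /\
  1 - outage_tail e1 Rd s I y <= inner_prob e1 Rd Rs s I y /\
  leak_tail e1 Rd Rs s I y <= inner_prob e1 Rd Rs s I y.
Proof.
  intros Hy. apply one_sub_Rmax0_bounds; [apply outage_tail_range | apply leak_tail_range; auto].
Qed.

End InnerProb.

Lemma ProbAF_exists e1 e2 Rd Rs s I :
  0 < e1 -> 0 < e2 -> 0 <= Rs -> Rs < Rd -> 0 < s -> 0 <= I ->
  exists p, ProbAF e1 e2 Rd Rs s I p.
Proof.
  intros He1 He2 HRs HRd Hs HI.
  set (G := fun y => exp_pdf e2 y * inner_prob e1 Rd Rs s I y).
  destruct (int_0_inf_of_bounded G 1) as [l Hl].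
  - apply locally_integrable_continuous. intros y.
    apply (continuous_mult (exp_pdf e2) (inner_prob e1 Rd Rs s I));
      [apply continuous_exp_pdf | apply continuous_inner_prob]; auto.
  - intros y Hy. pose proof (exp_pdf_pos e2 y He2).
    pose proof (inner_prob_bounds e1 Rd Rs s I He1 HRs HRd Hs HI y ltac:(lra)). unfold G. nra.
  - intros M HM. apply Rle_trans with (RInt (exp_decay (/ e2) (/ e2)) 0 M).
    + apply RInt_le; auto.
      * apply locally_integrable_continuous. intros y.
        apply (continuous_mult (exp_pdf e2) (inner_prob e1 Rd Rs s I));
          [apply continuous_exp_pdf | apply continuous_inner_prob]; auto.
      * apply locally_integrable_continuous, continuous_exp_decay.
      * intros y Hy. rewrite <- exp_pdf_decay by auto. pose proof (exp_pdf_pos e2 y He2).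
        pose proof (inner_prob_bounds e1 Rd Rs s I He1 HRs HRd Hs HI y ltac:(lra)). unfold G. nra.
    + rewrite RInt_exp_decay by (apply Rinv_neq_0_compat; intro; lra).
      rewrite Rmult_0_r, Ropp_0, exp_0.
      replace (/ e2 / / e2) with 1 by (field; intro; lra).
      pose proof (exp_pos (- (/ e2 * M))). lra.
  - exists l, (inner_prob e1 Rd Rs s I). split; auto.
    intros y Hy. apply int_0_inf_inner; auto.
Qed.

Lemma Rinv_affine_ge_Rmin a b t : 0 < a -> 0 < b -> 0 < t ->
  / (a + b) * Rmin 1 (/ t) <= / (a + b * t).
Proof.
  intros Ha Hb Ht. unfold Rmin. destruct (Rle_dec 1 (/ t)) as [H|H].
  - assert (t <= 1).
    { apply Rinv_le_contravar in H; [|lra]. rewrite Rinv_1, Rinv_inv in H. lra. }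
    rewrite Rmult_1_r. apply Rinv_le_contravar; nra.
  - assert (1 < t).
    { apply Rnot_le_lt in H. rewrite <- Rinv_1 in H. apply Rinv_lt_cancel in H; lra. }
    rewrite <- Rinv_mult. apply Rinv_le_contravar; nra.
Qed.

(* [t exp (- t) <= 1 - exp (- t)], i.e. [1 + t <= exp t], on both sides of [u = 1]. *)
Lemma one_sub_exp_ge_Rmin k u : 0 <= k -> 0 <= u ->
  k * exp (- k) * Rmin 1 u <= 1 - exp (- (k * u)).
Proof.
  intros Hk Hu.
  assert (Hkey : forall t, t * exp (- t) <= 1 - exp (- t)).
  { intros t. pose proof (exp_ineq1_le t). pose proof (exp_pos (- t)).
    assert (E : exp t * exp (- t) = 1) by (rewrite <- exp_plus, Rplus_opp_r; apply exp_0). nra. }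
  unfold Rmin. destruct (Rle_dec 1 u) as [H|H].
  - rewrite Rmult_1_r. eapply Rle_trans; [apply Hkey|].
    apply Rplus_le_compat_l, Ropp_le_contravar, exp_le_compat. nra.
  - eapply Rle_trans; [|apply Hkey].
    replace (k * exp (- k) * u) with (k * u * exp (- k)) by ring.
    apply Rmult_le_compat_l; [nra|]. apply exp_le_compat. nra.
Qed.

Section OuterBounds.

Variables e1 e2 Rd Rs s I : R.
Hypotheses (He1 : 0 < e1) (He2 : 0 < e2) (HRs : 0 <= Rs) (HRd : Rs < Rd) (Hs : 0 < s) (HI : 0 <= I).

Lemma ProbAF_ge g l p : ProbAF e1 e2 Rd Rs s I p -> int_0_inf g l ->
  (forall y, 0 < y -> g y <= exp_pdf e2 y * inner_prob e1 Rd Rs s I y) -> l <= p.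
Proof.
  intros [S [Hin Hout]] Hg Hle.
  apply (int_0_inf_le g (fun y => exp_pdf e2 y * S y)); auto.
  intros y Hy. rewrite (int_0_inf_unique _ _ _ (Hin y ltac:(lra))
                          (int_0_inf_inner e1 Rd Rs s I He1 HRs HRd Hs HI y ltac:(lra))).
  auto.
Qed.

Lemma ProbAF_le g l p : ProbAF e1 e2 Rd Rs s I p -> int_0_inf g l ->
  (forall y, 0 < y -> exp_pdf e2 y * inner_prob e1 Rd Rs s I y <= g y) -> p <= l.
Proof.
  intros [S [Hin Hout]] Hg Hle.
  apply (int_0_inf_le (fun y => exp_pdf e2 y * S y) g); auto.
  intros y Hy. rewrite (int_0_inf_unique _ _ _ (Hin y ltac:(lra))
                          (int_0_inf_inner e1 Rd Rs s I He1 HRs HRd Hs HI y ltac:(lra))).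
  auto.
Qed.

Lemma ProbAF_le_1 p : ProbAF e1 e2 Rd Rs s I p -> p <= 1.
Proof.
  intros HP. replace 1 with (/ e2 / / e2) by (field; intro; lra).
  apply (ProbAF_le (exp_decay (/ e2) (/ e2))); auto.
  - apply int_0_inf_exp_decay, Rinv_0_lt_compat; auto.
  - intros y Hy. rewrite <- exp_pdf_decay by auto.
    pose proof (exp_pdf_pos e2 y He2). pose proof (inner_prob_bounds e1 Rd Rs s I He1 HRs HRd Hs HI y ltac:(lra)). nra.
Qed.

Lemma exp_pdf_mul_leak_tail y :
  exp_pdf e2 y * leak_tail e1 Rd Rs s I y
  = exp_decay (/ e2 * exp (- (snr_threshold (Rd - Rs) / (s * e1))))
              (/ e2 + snr_threshold (Rd - Rs) * I / (s * e1)) y.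
Proof.
  unfold exp_pdf, leak_tail, leak_bound, exp_decay.
  rewrite !Rmult_assoc, <- !exp_plus. do 2 f_equal. field. repeat split; intro; lra.
Qed.

Lemma ProbAF_ge_leak p : ProbAF e1 e2 Rd Rs s I p ->
  / e2 * exp (- (snr_threshold (Rd - Rs) / (s * e1)))
    / (/ e2 + snr_threshold (Rd - Rs) * I / (s * e1)) <= p.
Proof.
  intros HP. pose proof (snr_threshold_pos (Rd - Rs) ltac:(lra)).
  apply (ProbAF_ge (exp_decay (/ e2 * exp (- (snr_threshold (Rd - Rs) / (s * e1))))
                              (/ e2 + snr_threshold (Rd - Rs) * I / (s * e1)))); auto.
  - apply int_0_inf_exp_decay.
    pose proof (Rinv_0_lt_compat e2 He2).
    assert (0 <= snr_threshold (Rd - Rs) * I / (s * e1)) by (apply Rdiv_le_0_compat; nra).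
    lra.
  - intros y Hy. rewrite <- exp_pdf_mul_leak_tail.
    apply Rmult_le_compat_l; [left; apply exp_pdf_pos; auto|].
    apply (inner_prob_bounds e1 Rd Rs s I He1 HRs HRd Hs HI y ltac:(lra)).
Qed.

Lemma outage_tail_le y :
  outage_tail e1 Rd s I y <= exp (- (snr_threshold Rd * I / (s * s)) / e1).
Proof.
  pose proof (snr_threshold_pos Rd ltac:(lra)) as Hc.
  unfold outage_tail. destruct (Rlt_dec 0 (outage_slope Rd s y)) as [Hal|]; [|left; apply exp_pos].
  pose proof (outage_slope_pos_y Rd Rs s HRs HRd Hs y ltac:(lra)) as Hy.
  apply exp_neg_div_le; auto.
  unfold outage_bound. apply (proj1 (Rle_div_r _ _ _ Hal)).
  replace (snr_threshold Rd * I / (s * s) * outage_slope Rd s y)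
    with (snr_threshold Rd * I * y - snr_threshold Rd * snr_threshold Rd * I / s)
    by (unfold outage_slope; field; intro; lra).
  assert (0 <= snr_threshold Rd * snr_threshold Rd * I / s) by (apply Rdiv_le_0_compat; nra).
  assert (0 < snr_threshold Rd * (s * y + 1)) by (apply Rmult_lt_0_compat; nra).
  unfold outage_level. lra.
Qed.

Lemma ProbAF_ge_outage p : ProbAF e1 e2 Rd Rs s I p ->
  1 - exp (- (snr_threshold Rd * I / (s * s)) / e1) <= p.
Proof.
  intros HP. set (c0 := 1 - exp (- (snr_threshold Rd * I / (s * s)) / e1)).
  replace c0 with (/ e2 * c0 / / e2) by (field; intro; lra).
  apply (ProbAF_ge (exp_decay (/ e2 * c0) (/ e2))); auto.
  - apply int_0_inf_exp_decay, Rinv_0_lt_compat; auto.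
  - intros y Hy.
    replace (exp_decay (/ e2 * c0) (/ e2) y) with (exp_pdf e2 y * c0)
      by (rewrite exp_pdf_decay by auto; unfold exp_decay; ring).
    apply Rmult_le_compat_l; [left; apply exp_pdf_pos; auto|].
    pose proof (outage_tail_le y). pose proof (inner_prob_bounds e1 Rd Rs s I He1 HRs HRd Hs HI y ltac:(lra)). unfold c0. lra.
Qed.

(* Beyond [g2 = 2 c / s] the slope is at least [s^2 g2 / 2], which bounds the outage
   bound; below it [exp (1 - g2 s / (2 c)) >= 1] takes over. *)
Lemma one_sub_outage_tail_le y : 0 < y ->
  1 - outage_tail e1 Rd s I y
  <= (2 * snr_threshold Rd * (s + I) / (s * s) + / s) / e1
     + exp (1 - y * s / (2 * snr_threshold Rd)).
Proof.
  intros Hy. set (c := snr_threshold Rd).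
  assert (Hc : 0 < c) by (apply snr_threshold_pos; lra).
  assert (HK : 0 <= (2 * c * (s + I) / (s * s) + / s) / e1).
  { apply Rdiv_le_0_compat; auto.
    assert (0 <= 2 * c * (s + I) / (s * s)) by (apply Rdiv_le_0_compat; nra).
    pose proof (Rinv_0_lt_compat s Hs). lra. }
  pose proof (outage_tail_range e1 Rd Rs s I He1 HRs HRd Hs HI y).
  destruct (Rlt_dec (y * s) (2 * c)) as [Hys|Hys].
  - assert (1 <= exp (1 - y * s / (2 * c))); [|lra].
    apply Rle_trans with (exp 0); [rewrite exp_0; lra | apply exp_le_compat].
    assert (y * s / (2 * c) <= 1) by (apply Rle_div_l; lra). lra.
  - assert (Hslope : s * s * y / 2 <= outage_slope Rd s y) by (unfold outage_slope; fold c; nra).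
    unfold outage_tail. destruct (Rlt_dec 0 (outage_slope Rd s y)) as [Hal|]; [|nra].
    pose proof (exp_pos (1 - y * s / (2 * c))).
    pose proof (exp_ineq1_le (- outage_bound Rd s I y / e1)).
    assert (outage_bound Rd s I y <= 2 * c * (s + I) / (s * s) + / s); [|
      assert (outage_bound Rd s I y / e1 <= (2 * c * (s + I) / (s * s) + / s) / e1)
        by (apply Rmult_le_compat_r; [left; apply Rinv_0_lt_compat |]; lra);
      unfold Rdiv in *; lra].
    pose proof (outage_level_pos Rd Rs s I HRs HRd Hs HI y ltac:(lra)) as Hlev.
    apply Rle_trans with (outage_level Rd s I y / (s * s * y / 2)).
    + unfold outage_bound, Rdiv. apply Rmult_le_compat_l; [lra|].
      apply Rinv_le_contravar; [nra | auto].
    + replace (outage_level Rd s I y / (s * s * y / 2))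
        with (2 * c * (s + I) / (s * s) + 2 * c / (s * s * y))
        by (unfold outage_level; fold c; field; repeat split; intro; lra).
      apply Rplus_le_compat_l. apply Rle_div_l; [nra|].
      replace (/ s * (s * s * y)) with (s * y) by (field; intro; lra). lra.
Qed.

Lemma ProbAF_le_sum p : ProbAF e1 e2 Rd Rs s I p ->
  p <= (2 * snr_threshold Rd * (s + I) / (s * s) + / s) / e1
       + / e2 * exp 1 / (/ e2 + s / (2 * snr_threshold Rd))
       + / e2 * exp (- (snr_threshold (Rd - Rs) / (s * e1)))
         / (/ e2 + snr_threshold (Rd - Rs) * I / (s * e1)).
Proof.
  intros HP. set (c := snr_threshold Rd). set (c' := snr_threshold (Rd - Rs)).
  assert (Hc : 0 < c) by (apply snr_threshold_pos; lra).
  assert (Hc' : 0 < c') by (apply snr_threshold_pos; lra).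
  set (K := (2 * c * (s + I) / (s * s) + / s) / e1).
  pose proof (Rinv_0_lt_compat e2 He2).
  replace K with (/ e2 * K / / e2) by (field; intro; lra).
  apply (ProbAF_le (fun y => exp_decay (/ e2 * K) (/ e2) y
                             + exp_decay (/ e2 * exp 1) (/ e2 + s / (2 * c)) y
                             + exp_decay (/ e2 * exp (- (c' / (s * e1)))) (/ e2 + c' * I / (s * e1)) y));
    auto.
  - apply int_0_inf_plus; [apply int_0_inf_plus|]; apply int_0_inf_exp_decay; auto.
    + assert (0 < s / (2 * c)) by (apply Rdiv_lt_0_compat; lra). lra.
    + assert (0 <= c' * I / (s * e1)) by (apply Rdiv_le_0_compat; nra). lra.
  - intros y Hy. unfold c'. rewrite <- exp_pdf_mul_leak_tail.
    replace (exp_decay (/ e2 * K) (/ e2) y) with (exp_pdf e2 y * K)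
      by (rewrite exp_pdf_decay by auto; unfold exp_decay; ring).
    replace (exp_decay (/ e2 * exp 1) (/ e2 + s / (2 * c)) y)
      with (exp_pdf e2 y * exp (1 - y * s / (2 * c))).
    2:{ rewrite exp_pdf_decay by auto. unfold exp_decay.
        rewrite !Rmult_assoc, <- !exp_plus. do 2 f_equal. field. repeat split; intro; lra. }
    rewrite <- !Rmult_plus_distr_l.
    apply Rmult_le_compat_l; [left; apply exp_pdf_pos; auto|].
    pose proof (inner_prob_bounds e1 Rd Rs s I He1 HRs HRd Hs HI y ltac:(lra)). pose proof (one_sub_outage_tail_le y Hy).
    unfold K, c in *. lra.
Qed.

End OuterBounds.

Definition leak_const (e1 e2 Rd Rs : R) : R :=
  / e2 * exp (- (snr_threshold (Rd - Rs) / e1)) / (/ e2 + snr_threshold (Rd - Rs) / e1).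
Definition outage_const (e1 Rd : R) : R :=
  snr_threshold Rd / e1 * exp (- (snr_threshold Rd / e1)).
Definition upper_const (e1 e2 Rd Rs : R) : R :=
  (2 * snr_threshold Rd + 1) / e1 + 2 * snr_threshold Rd * exp 1 / e2
  + e1 / (e2 * snr_threshold (Rd - Rs)).

Lemma Rdiv_le_drop_l u u' v w : 0 <= u' <= u -> 0 < v -> 0 <= w -> u' / (w + v) <= u / v.
Proof.
  intros Hu Hv Hw. unfold Rdiv. apply Rmult_le_compat; try lra.
  - left. apply Rinv_0_lt_compat. lra.
  - apply Rinv_le_contravar; lra.
Qed.

Section HighSNRBounds.

Variables e1 e2 Rd Rs : R.
Hypotheses (He1 : 0 < e1) (He2 : 0 < e2) (HRs : 0 <= Rs) (HRd : Rs < Rd).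

Lemma ProbAF_ge_leak_Rmin s I p : 1 <= s -> 0 < I -> ProbAF e1 e2 Rd Rs s I p ->
  leak_const e1 e2 Rd Rs * Rmin 1 (s / I) <= p.
Proof.
  intros Hs HI HP. eapply Rle_trans; [|apply (ProbAF_ge_leak e1 e2 Rd Rs s I); auto; lra].
  set (c' := snr_threshold (Rd - Rs)).
  assert (Hc' : 0 < c') by (apply snr_threshold_pos; lra).
  pose proof (Rinv_0_lt_compat e2 He2).
  assert (Hk : exp (- (c' / e1)) <= exp (- (c' / (s * e1)))).
  { apply exp_le_compat, Ropp_le_contravar. unfold Rdiv.
    apply Rmult_le_compat_l; [lra|]. apply Rinv_le_contravar; nra. }
  assert (Hr : / (/ e2 + c' / e1) * Rmin 1 (s / I) <= / (/ e2 + c' * I / (s * e1))).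
  { replace (s / I) with (/ (I / s)) by (field; split; intro; lra).
    replace (c' * I / (s * e1)) with (c' / e1 * (I / s)) by (field; split; intro; lra).
    apply Rinv_affine_ge_Rmin; auto; apply Rdiv_lt_0_compat; lra. }
  assert (Hmin : 0 <= Rmin 1 (s / I)).
  { unfold Rmin. destruct (Rle_dec 1 (s / I)); [lra | left; apply Rdiv_lt_0_compat; lra]. }
  assert (0 < / e2 + c' / e1) by (apply Rplus_lt_0_compat; auto; apply Rdiv_lt_0_compat; lra).
  unfold leak_const. fold c'. unfold Rdiv at 1 4. rewrite Rmult_assoc.
  apply Rmult_le_compat; auto.
  - apply Rmult_le_pos; [lra | left; apply exp_pos].
  - apply Rmult_le_pos; [left; apply Rinv_0_lt_compat |]; auto.
  - apply Rmult_le_compat_l; auto; lra.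
Qed.

Lemma ProbAF_ge_outage_Rmin s I p : 0 < s -> 0 < I -> ProbAF e1 e2 Rd Rs s I p ->
  outage_const e1 Rd * Rmin 1 (I / (s * s)) <= p.
Proof.
  intros Hs HI HP. eapply Rle_trans; [|apply (ProbAF_ge_outage e1 e2 Rd Rs s I); auto; lra].
  pose proof (snr_threshold_pos Rd ltac:(lra)).
  replace (- (snr_threshold Rd * I / (s * s)) / e1)
    with (- (snr_threshold Rd / e1 * (I / (s * s)))) by (field; repeat split; intro; lra).
  apply one_sub_exp_ge_Rmin; left; apply Rdiv_lt_0_compat; nra.
Qed.

Lemma ProbAF_le_powers s I p : 1 <= s -> 0 < I -> ProbAF e1 e2 Rd Rs s I p ->
  p <= upper_const e1 e2 Rd Rs * (/ s + I / (s * s) + s / I).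
Proof.
  intros Hs HI HP. eapply Rle_trans; [apply (ProbAF_le_sum e1 e2 Rd Rs s I); auto; lra|].
  set (c := snr_threshold Rd). set (c' := snr_threshold (Rd - Rs)).
  assert (Hc : 0 < c) by (apply snr_threshold_pos; lra).
  assert (Hc' : 0 < c') by (apply snr_threshold_pos; lra).
  pose proof (Rinv_0_lt_compat e1 He1). pose proof (Rinv_0_lt_compat e2 He2).
  pose proof (exp_pos 1).
  assert (T1 : (2 * c * (s + I) / (s * s) + / s) / e1
               = (2 * c + 1) / e1 * / s + 2 * c / e1 * (I / (s * s)))
    by (field; repeat split; intro; lra).
  assert (T2 : / e2 * exp 1 / (/ e2 + s / (2 * c)) <= 2 * c * exp 1 / e2 * / s).
  { apply Rle_trans with (/ e2 * exp 1 / (s / (2 * c))).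
    - apply Rdiv_le_drop_l; [split; nra | apply Rdiv_lt_0_compat; lra | lra].
    - right. field. repeat split; intro; lra. }
  assert (T3 : / e2 * exp (- (c' / (s * e1))) / (/ e2 + c' * I / (s * e1))
               <= e1 / (e2 * c') * (s / I)).
  { assert (exp (- (c' / (s * e1))) <= 1).
    { rewrite <- exp_0. apply exp_le_compat.
      assert (0 < c' / (s * e1)) by (apply Rdiv_lt_0_compat; nra). lra. }
    pose proof (exp_pos (- (c' / (s * e1)))).
    apply Rle_trans with (/ e2 / (c' * I / (s * e1))).
    - apply Rdiv_le_drop_l; [split; nra | apply Rdiv_lt_0_compat; nra | lra].
    - right. field. repeat split; intro; lra. }
  assert (0 < / s) by (apply Rinv_0_lt_compat; lra).
  assert (0 < I / (s * s)) by (apply Rdiv_lt_0_compat; nra).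
  assert (0 < s / I) by (apply Rdiv_lt_0_compat; lra).
  assert (0 < 2 * c * exp 1 / e2) by (apply Rdiv_lt_0_compat; nra).
  assert (0 < e1 / (e2 * c')) by (apply Rdiv_lt_0_compat; nra).
  assert (0 < (2 * c + 1) / e1) by (apply Rdiv_lt_0_compat; lra).
  assert (2 * c / e1 <= (2 * c + 1) / e1) by (unfold Rdiv; nra).
  unfold upper_const. fold c c'. rewrite T1. nra.
Qed.

End HighSNRBounds.

Lemma Rmin_1_Rpower s x : 1 < s -> Rmin 1 (Rpower s x) = Rpower s (- Rmax 0 (- x)).
Proof.
  intros Hs. unfold Rmin, Rmax.
  destruct (Rle_dec 0 (- x)) as [Hx|Hx]; rewrite ?Ropp_involutive.
  - destruct (Rle_dec 1 (Rpower s x)) as [H|H]; auto.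
    destruct Hx as [Hx|Hx].
    + exfalso. pose proof (Rpower_lt s x 0 Hs ltac:(lra)) as Hlt. rewrite Rpower_O in Hlt by lra. lra.
    + replace x with 0 by lra. symmetry. apply Rpower_O. lra.
  - rewrite Ropp_0, Rpower_O by lra.
    destruct (Rle_dec 1 (Rpower s x)) as [H|H]; auto.
    exfalso. apply H. rewrite <- (Rpower_O s) by lra. apply Rle_Rpower; lra.
Qed.

Lemma Rpower_sub_1 s x : 0 < s -> s / Rpower s x = Rpower s (1 - x).
Proof. intros Hs. unfold Rminus. rewrite Rpower_plus, Rpower_1, Rpower_Ropp by auto. reflexivity. Qed.

Lemma Rpower_sub_2 s x : 0 < s -> Rpower s x / (s * s) = Rpower s (x - 2).
Proof.
  intros Hs. unfold Rminus. rewrite Rpower_plus, Rpower_Ropp.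
  replace 2 with (1 + 1) by ring. rewrite Rpower_plus, Rpower_1 by auto. reflexivity.
Qed.

Ltac destruct_Rle_dec :=
  repeat match goal with
         | |- context [Rle_dec ?a ?b] => destruct (Rle_dec a b)
         | H : context [Rle_dec ?a ?b] |- _ => destruct (Rle_dec a b)
         end.

Lemma sdg_AF_Rmin rho : sdg_AF rho = Rmin (Rmax 0 (rho - 1)) (Rmax 0 (2 - rho)).
Proof.
  unfold sdg_AF, Rmin, Rmax. destruct_Rle_dec; lra.
Qed.

Lemma sdg_AF_nonneg rho : 0 <= sdg_AF rho.
Proof.
  rewrite sdg_AF_Rmin. unfold Rmin, Rmax. destruct_Rle_dec; lra.
Qed.

Lemma Rmin_Rpower_le s k1 k2 m1 m2 p : 1 < s -> 0 < k1 -> 0 < k2 ->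
  k1 * Rpower s (- m1) <= p -> k2 * Rpower s (- m2) <= p ->
  Rmin k1 k2 * Rpower s (- Rmin m1 m2) <= p.
Proof.
  intros Hs Hk1 Hk2 H1 H2. unfold Rmin at 2.
  destruct (Rle_dec m1 m2); [eapply Rle_trans; [|exact H1] | eapply Rle_trans; [|exact H2]];
    apply Rmult_le_compat_r; try (left; apply exp_pos); [apply Rmin_l | apply Rmin_r].
Qed.

(* A positive gain forces [1 < rho < 2] with the gain below [rho - 1], [2 - rho] and [1]. *)
Lemma sum_Rpower_le_sdg_AF s rho : 1 < s -> 0 < sdg_AF rho ->
  Rpower s (-1) + Rpower s (rho - 2) + Rpower s (1 - rho) <= 3 * Rpower s (- sdg_AF rho).
Proof.
  intros Hs Hd.
  assert (Hgain : sdg_AF rho <= rho - 1 /\ sdg_AF rho <= 2 - rho).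
  { unfold sdg_AF in *. destruct_Rle_dec; lra. }
  assert (forall a, a <= - sdg_AF rho -> Rpower s a <= Rpower s (- sdg_AF rho))
    by (intros; apply Rle_Rpower; lra).
  assert (Rpower s (-1) <= Rpower s (- sdg_AF rho)) by (apply H; lra).
  assert (Rpower s (rho - 2) <= Rpower s (- sdg_AF rho)) by (apply H; lra).
  assert (Rpower s (1 - rho) <= Rpower s (- sdg_AF rho)) by (apply H; lra).
  lra.
Qed.

Section GainBounds.

Variables e1 e2 Rd Rs : R.
Hypotheses (He1 : 0 < e1) (He2 : 0 < e2) (HRs : 0 <= Rs) (HRd : Rs < Rd).

Lemma leak_const_pos : 0 < leak_const e1 e2 Rd Rs.
Proof.
  pose proof (snr_threshold_pos (Rd - Rs) ltac:(lra)).
  unfold leak_const. apply Rdiv_lt_0_compat.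
  - apply Rmult_lt_0_compat; [apply Rinv_0_lt_compat; auto | apply exp_pos].
  - apply Rplus_lt_0_compat; [apply Rinv_0_lt_compat | apply Rdiv_lt_0_compat]; auto.
Qed.

Lemma outage_const_pos : 0 < outage_const e1 Rd.
Proof.
  pose proof (snr_threshold_pos Rd ltac:(lra)).
  unfold outage_const. apply Rmult_lt_0_compat; [apply Rdiv_lt_0_compat; auto | apply exp_pos].
Qed.

Lemma upper_const_pos : 0 < upper_const e1 e2 Rd Rs.
Proof.
  pose proof (snr_threshold_pos Rd ltac:(lra)). pose proof (snr_threshold_pos (Rd - Rs) ltac:(lra)).
  unfold upper_const. pose proof (exp_pos 1).
  assert (0 < (2 * snr_threshold Rd + 1) / e1) by (apply Rdiv_lt_0_compat; lra).
  assert (0 < 2 * snr_threshold Rd * exp 1 / e2) by (apply Rdiv_lt_0_compat; nra).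
  assert (0 < e1 / (e2 * snr_threshold (Rd - Rs))) by (apply Rdiv_lt_0_compat; nra).
  lra.
Qed.

Lemma ProbAF_ge_Rpower rho s p : 1 < s -> ProbAF e1 e2 Rd Rs s (Rpower s rho) p ->
  Rmin (leak_const e1 e2 Rd Rs) (outage_const e1 Rd) * Rpower s (- sdg_AF rho) <= p.
Proof.
  intros Hs HP. assert (HI : 0 < Rpower s rho) by apply exp_pos.
  rewrite sdg_AF_Rmin. apply Rmin_Rpower_le; auto using leak_const_pos, outage_const_pos.
  - rewrite <- (Ropp_minus_distr 1 rho), <- Rmin_1_Rpower, <- Rpower_sub_1 by lra.
    apply (ProbAF_ge_leak_Rmin e1 e2 Rd Rs); auto; lra.
  - replace (2 - rho) with (- (rho - 2)) by ring.
    rewrite <- Rmin_1_Rpower, <- Rpower_sub_2 by lra.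
    apply (ProbAF_ge_outage_Rmin e1 e2 Rd Rs); auto; lra.
Qed.

Lemma ProbAF_le_Rpower rho s p : 1 < s -> ProbAF e1 e2 Rd Rs s (Rpower s rho) p ->
  p <= Rmax 1 (3 * upper_const e1 e2 Rd Rs) * Rpower s (- sdg_AF rho).
Proof.
  intros Hs HP. assert (HI : 0 < Rpower s rho) by apply exp_pos.
  pose proof (ProbAF_le_powers e1 e2 Rd Rs He1 He2 HRs HRd s (Rpower s rho) p ltac:(lra) HI HP)
    as Hup.
  assert (Hinv : / s = Rpower s (-1)).
  { rewrite <- (Rpower_1 s) at 1 by lra. rewrite <- Rpower_Ropp. f_equal. }
  rewrite Hinv, Rpower_sub_1, Rpower_sub_2 in Hup by lra.
  pose proof upper_const_pos.
  pose proof (Rmax_l 1 (3 * upper_const e1 e2 Rd Rs)).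
  pose proof (Rmax_r 1 (3 * upper_const e1 e2 Rd Rs)).
  assert (Hpow : 0 < Rpower s (- sdg_AF rho)) by apply exp_pos.
  destruct (Rle_lt_or_eq_dec 0 (sdg_AF rho) (sdg_AF_nonneg rho)) as [Hd|Hd].
  - pose proof (sum_Rpower_le_sdg_AF s rho Hs Hd). nra.
  - rewrite <- Hd, Ropp_0, Rpower_O by lra.
    pose proof (ProbAF_le_1 e1 e2 Rd Rs s (Rpower s rho) He1 He2 HRs HRd ltac:(lra) ltac:(lra) p HP).
    lra.
Qed.

End GainBounds.

Lemma ln_gt_of_exp_lt a s : exp a < s -> a < ln s.
Proof. intros H. rewrite <- (ln_exp a). apply ln_increasing; auto. apply exp_pos. Qed.

Lemma div_ln_lt M e s : 0 < e -> Rmax 1 (exp (M / e)) < s -> M / ln s < e.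
Proof.
  intros He Hs. pose proof (Rmax_l 1 (exp (M / e))). pose proof (Rmax_r 1 (exp (M / e))).
  assert (HL : 0 < ln s) by (rewrite <- ln_1; apply ln_increasing; lra).
  assert (HM : M / e < ln s) by (apply ln_gt_of_exp_lt; lra).
  apply Rlt_div_l; auto. apply Rlt_div_l in HM; auto. lra.
Qed.

Lemma limsup_infty_of_Rpower_bounds (p : R -> R) d k C : 0 < k -> 0 < C ->
  (forall s, 1 < s -> k * Rpower s (- d) <= p s <= C * Rpower s (- d)) ->
  limsup_infty (fun s => - ln (p s) / ln s) d.
Proof.
  intros Hk HC Hp e He.
  assert (Hb : forall s, 1 < s ->
            d - Rabs (ln C) / ln s <= - ln (p s) / ln s <= d + Rabs (ln k) / ln s).
  { intros s Hs. assert (HL : 0 < ln s) by (rewrite <- ln_1; apply ln_increasing; lra).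
    destruct (Hp s Hs) as [H1 H2].
    assert (Hpos : 0 < k * Rpower s (- d)) by (apply Rmult_lt_0_compat; [auto | apply exp_pos]).
    assert (Lk : ln k - d * ln s <= ln (p s)).
    { replace (ln k - d * ln s) with (ln (k * Rpower s (- d)))
        by (rewrite ln_mult, ln_Rpower by (auto; apply exp_pos); ring).
      apply ln_le; auto. }
    assert (LC : ln (p s) <= ln C - d * ln s).
    { replace (ln C - d * ln s) with (ln (C * Rpower s (- d)))
        by (rewrite ln_mult, ln_Rpower by (auto; apply exp_pos); ring).
      apply ln_le; lra. }
    replace (- ln (p s) / ln s) with (d + (- ln (p s) - d * ln s) / ln s)
      by (field; intro; lra).
    pose proof (Rle_abs (ln C)). pose proof (Rle_abs (- ln k)). rewrite Rabs_Ropp in *.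
    assert (N1 : - Rabs (ln C) <= - ln (p s) - d * ln s) by lra.
    assert (N2 : - ln (p s) - d * ln s <= Rabs (ln k)) by lra.
    assert (Hdiv : forall a b, a <= b -> a / ln s <= b / ln s)
      by (intros; unfold Rdiv; apply Rmult_le_compat_r; [left; apply Rinv_0_lt_compat|]; auto).
    apply Hdiv in N1. apply Hdiv in N2.
    replace (- Rabs (ln C) / ln s) with (- (Rabs (ln C) / ln s)) in N1 by (field; intro; lra).
    lra. }
  split.
  - exists (Rmax 1 (exp (Rabs (ln k) / e))). intros s Hs.
    pose proof (Rmax_l 1 (exp (Rabs (ln k) / e))).
    pose proof (div_ln_lt (Rabs (ln k)) e s He Hs). pose proof (Hb s ltac:(lra)). lra.
  - intros X. set (s := Rmax X (Rmax 1 (exp (Rabs (ln C) / e))) + 1).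
    pose proof (Rmax_l X (Rmax 1 (exp (Rabs (ln C) / e)))).
    pose proof (Rmax_r X (Rmax 1 (exp (Rabs (ln C) / e)))).
    pose proof (Rmax_l 1 (exp (Rabs (ln C) / e))).
    exists s. split; [unfold s; lra|].
    pose proof (div_ln_lt (Rabs (ln C)) e s He ltac:(unfold s; lra)).
    pose proof (Hb s ltac:(unfold s; lra)). lra.
Qed.

Theorem mainTheorem8 (e1 e2 Rd Rs rho : R)
  (He1 : 0 < e1) (He2 : 0 < e2) (HRs : 0 <= Rs) (HRd : Rs < Rd) (Hrho : 0 <= rho) :
  (exists pt : R -> R, forall snr : R, 0 < snr ->
     ProbAF e1 e2 Rd Rs snr (Rpower snr rho) (pt snr)) /\
  (forall pt : R -> R,
     (forall snr : R, 0 < snr -> ProbAF e1 e2 Rd Rs snr (Rpower snr rho) (pt snr)) ->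
     limsup_infty (fun snr => - ln (pt snr) / ln snr) (sdg_AF rho)).
Proof.
  split.
  - apply (choice (fun snr p => 0 < snr -> ProbAF e1 e2 Rd Rs snr (Rpower snr rho) p)).
    intros snr. destruct (Rlt_dec 0 snr) as [Hsnr|Hsnr]; [|exists 0; intros; contradiction].
    destruct (ProbAF_exists e1 e2 Rd Rs snr (Rpower snr rho)) as [p Hp];
      auto; [left; apply exp_pos|]. eauto.
  - intros pt Hpt.
    apply (limsup_infty_of_Rpower_bounds _ _ (Rmin (leak_const e1 e2 Rd Rs) (outage_const e1 Rd))
                                              (Rmax 1 (3 * upper_const e1 e2 Rd Rs))).
    { apply Rmin_pos; [apply leak_const_pos | apply (outage_const_pos e1 Rd Rs)]; auto. }
    { pose proof (Rmax_l 1 (3 * upper_const e1 e2 Rd Rs)). lra. }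
    intros s Hs. assert (HP := Hpt s ltac:(lra)).
    split; [apply ProbAF_ge_Rpower | apply ProbAF_le_Rpower]; auto.
Qed.
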